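(* Let $X$ be a hyperbolic approximation of $Z$ with parameter $r$, let $v,v'\in V$ be horizontally distinct, and let $l$ be their critical level. Then $|vv'|\le\ell(v)+\ell(v')-2l+3$.
   Context: Hyperbolic approximation: let $(Z,d)$ be a bounded metric space with at least two points and fix $0<r\le1/6$. Let $k_0$ be the largest integer with $\operatorname{diam}Z<r^{k_0}$. For each integer $k\ge k_0$ choose a maximal $r^k$-separated subset $V_k\subset Z$. Vertex set $V=\bigsqcup_{k\ge k_0}V_k$ (disjoint union), level $\ell(v)=k$ for $v\in V_k$, ball $B(v)=\{z:d(z,v)<2r^k\}$ with closure $\overline B(v)$. Edges: equal-level $v,v'$ with $\overline B(v)\cap\overline B(v')\ne\emptyset$, or vertices on adjacent levels whose higher-level ball is contained in the lower-level ball. Path metric with unit edges, $|vv'|$; $d$ is the metric of $Z$. Vertices $v,v'$ are horizontally distinct if $\ell(v),\ell(v')\ge0$ and $d(v,v')\ge r^{\min\{\ell(v),\ell(v')\}}$; in that case their critical level is the integer $l$ with $r^l\le d(v,v')<r^{l-1}$. *)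

From Stdlib Require Import Reals ZArith.
Open Scope R_scope.

Definition is_metric {T : Type} (d : T -> T -> R) : Prop :=
  (forall x y, 0 <= d x y) /\
  (forall x y, d x y = 0 <-> x = y) /\
  (forall x y, d x y = d y x) /\
  (forall x y z, d x z <= d x y + d y z).

Definition bounded_metric {T : Type} (d : T -> T -> R) : Prop :=
  exists M, forall x y, d x y <= M.

Definition is_diam {T : Type} (d : T -> T -> R) (D : R) : Prop :=
  is_lub (fun t => exists x y, t = d x y) D.

Definition separated {T : Type} (d : T -> T -> R) (eps : R) (S : T -> Prop) : Prop :=
  forall x y, S x -> S y -> x <> y -> eps <= d x y.

Definition maximal_separated {T : Type} (d : T -> T -> R) (eps : R) (S : T -> Prop) : Prop :=
  separated d eps S /\
  forall S' : T -> Prop, separated d eps S' -> (forall x, S x -> S' x) ->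
    forall x, S' x -> S x.

(* Vertices of the disjoint union: a level together with a point. *)
Record vertex (T : Type) := mkVertex { lev : Z; pt : T }.
Arguments mkVertex {T}.
Arguments lev {T}.
Arguments pt {T}.

Section HypApprox.
Context {T : Type} (d : T -> T -> R) (r : R) (k0 : Z) (V : Z -> T -> Prop).

Definition inV (v : vertex T) : Prop := (k0 <= lev v)%Z /\ V (lev v) (pt v).

Definition ball (v : vertex T) (z : T) : Prop := d z (pt v) < 2 * powerRZ r (lev v).

Definition cl_ball (v : vertex T) (z : T) : Prop :=
  forall eps, 0 < eps -> exists w, ball v w /\ d z w < eps.

Definition edge (v w : vertex T) : Prop :=
  inV v /\ inV w /\ v <> w /\
  ( (lev v = lev w /\ exists z, cl_ball v z /\ cl_ball w z)
  \/ (lev w = (lev v + 1)%Z /\ forall z, ball w z -> ball v z)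
  \/ (lev v = (lev w + 1)%Z /\ forall z, ball v z -> ball w z) ).

Inductive walk : nat -> vertex T -> vertex T -> Prop :=
| walk0 : forall u, inV u -> walk 0 u u
| walkS : forall n u x w, edge u x -> walk n x w -> walk (S n) u w.

(* |v w| <= N for the path metric with unit edges *)
Definition gdist_le (v w : vertex T) (N : Z) : Prop :=
  exists n : nat, walk n v w /\ (Z.of_nat n <= N)%Z.

Definition horiz_distinct (v w : vertex T) : Prop :=
  (0 <= lev v)%Z /\ (0 <= lev w)%Z /\
  powerRZ r (Z.min (lev v) (lev w)) <= d (pt v) (pt w).

Definition critical_level (v w : vertex T) (l : Z) : Prop :=
  powerRZ r l <= d (pt v) (pt w) /\ d (pt v) (pt w) < powerRZ r (l - 1).

End HypApprox.

Definition is_hyp_approx {T : Type} (d : T -> T -> R) (r : R) (k0 : Z)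
    (V : Z -> T -> Prop) : Prop :=
  is_metric d /\ bounded_metric d /\ (exists x y : T, x <> y) /\
  0 < r /\ r <= 1/6 /\
  (exists D, is_diam d D /\ D < powerRZ r k0 /\
             forall k : Z, D < powerRZ r k -> (k <= k0)%Z) /\
  (forall k : Z, (k0 <= k)%Z -> maximal_separated d (powerRZ r k) (V k)).

(** Climb from [v] through a chain of parents, one per level, down to level
    [l - 1], and likewise from [v']: consecutive vertices of such a chain are
    joined by an edge because [r <= 1/3] makes each ball contain the next one.
    At level [l - 1] the two chain ends are equal or adjacent, since both of
    their balls contain [pt v] (they have radius [2 r^(l-1)] and
    [d(pt v, pt v') < r^(l-1)]).  This gives a walk of length
    [(lev v - l + 1) + 1 + (lev v' - l + 1)]. *)

From Stdlib Require Import Reals ZArith.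
From Stdlib Require Import Lra Lia Classical.
Open Scope R_scope.

Lemma powerRZ_lt_decr (r : R) (a b : Z) : 0 < r -> r < 1 -> (b < a)%Z ->
  powerRZ r a < powerRZ r b.
Proof.
  intros Hr0 Hr1 Hab. rewrite !powerRZ_Rpower by lra. unfold Rpower.
  apply exp_increasing.
  assert (ln r < 0) by (rewrite <- ln_1; apply ln_increasing; lra).
  apply IZR_lt in Hab. nra.
Qed.

Lemma powerRZ_lt_decr_inv (r : R) (a b : Z) : 0 < r -> r < 1 ->
  powerRZ r a < powerRZ r b -> (b < a)%Z.
Proof.
  intros Hr0 Hr1 H. destruct (Z_lt_le_dec b a) as [Hba | Hab]; auto.
  destruct (Z.eq_dec a b) as [-> | Hne]; [lra |].
  assert (powerRZ r b < powerRZ r a) by (apply powerRZ_lt_decr; auto; lia). lra.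
Qed.

Lemma powerRZ_succ (r : R) (j : Z) : 0 < r -> powerRZ r (j + 1) = r * powerRZ r j.
Proof. intros. rewrite powerRZ_add by lra. simpl. lra. Qed.

Lemma maximal_separated_net {T : Type} (d : T -> T -> R) (eps : R) (S : T -> Prop) :
  is_metric d -> 0 < eps -> maximal_separated d eps S ->
  forall x, exists c, S c /\ d c x < eps.
Proof.
  intros [_ [Hzero [Hsym _]]] Heps [Hsep Hmax] x.
  destruct (classic (exists c, S c /\ d c x < eps)) as [H | Hfar]; auto.
  assert (Hfar' : forall c, S c -> eps <= d c x).
  { intros c Hc. destruct (Rle_or_lt eps (d c x)); auto.
    exfalso; apply Hfar; eauto. }
  assert (Hx : S x).
  { apply (Hmax (fun y => S y \/ y = x)); auto.
    intros a b [Ha | ->] [Hb | ->] Hab; try rewrite (Hsym x); auto; tauto. }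
  exists x. split; auto. assert (d x x = 0) by (apply Hzero; auto). lra.
Qed.

Section Walks.
Context {T : Type} (d : T -> T -> R) (r : R) (k0 : Z) (V : Z -> T -> Prop).

Lemma edge_sym v w : edge d r k0 V v w -> edge d r k0 V w v.
Proof.
  intros [Hv [Hw [Hne Hadj]]]. split; [exact Hw | split; [exact Hv | split]].
  { intros ->; auto. }
  destruct Hadj as [[Heq [z [Hz Hz']]] | [Hup | Hdown]].
  - left. split; auto. exists z; auto.
  - right; right; auto.
  - right; left; auto.
Qed.

Lemma walk_app n m u x w : walk d r k0 V n u x -> walk d r k0 V m x w ->
  walk d r k0 V (n + m) u w.
Proof. induction 1; intros; simpl; auto. eapply walkS; eauto. Qed.

Lemma walk_rev n u w : walk d r k0 V n u w -> walk d r k0 V n w u.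
Proof.
  induction 1 as [u Hu | n u x w Hux Hxw IH]; [constructor; auto |].
  replace (S n) with (n + 1)%nat by lia. eapply walk_app; [exact IH |].
  eapply walkS; [apply edge_sym; exact Hux | constructor; apply Hux].
Qed.

Lemma gdist_le_of_walk n v w : walk d r k0 V n v w ->
  gdist_le d r k0 V v w (Z.of_nat n).
Proof. intros H. exists n. split; [exact H | lia]. Qed.

Lemma gdist_le_sym v w N : gdist_le d r k0 V v w N -> gdist_le d r k0 V w v N.
Proof. intros [n [H Hn]]. exists n. split; [apply walk_rev |]; auto. Qed.

Lemma gdist_le_trans u v w M N :
  gdist_le d r k0 V u v M -> gdist_le d r k0 V v w N ->
  gdist_le d r k0 V u w (M + N).
Proof.
  intros [m [Hm HM]] [n [Hn HN]]. exists (m + n)%nat.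
  split; [eapply walk_app; eauto | lia].
Qed.

Lemma gdist_le_edge v w : edge d r k0 V v w -> gdist_le d r k0 V v w 1.
Proof.
  intros Hvw. exists 1%nat. split; [| lia].
  eapply walkS; [exact Hvw | constructor; apply Hvw].
Qed.

Lemma gdist_le_refl v N : inV k0 V v -> (0 <= N)%Z -> gdist_le d r k0 V v v N.
Proof. intros Hv HN. exists 0%nat. split; [constructor; auto | lia]. Qed.

End Walks.

Section HyperbolicApproximation.
Context {T : Type} (d : T -> T -> R) (r : R) (k0 : Z) (V : Z -> T -> Prop).
Hypothesis Hm : is_metric d.
Hypothesis Hr0 : 0 < r.
Hypothesis Hr1 : r <= 1/6.
Hypothesis HV : forall k : Z, (k0 <= k)%Z -> maximal_separated d (powerRZ r k) (V k).

Lemma ball_sub_cl_ball v z : ball d r v z -> cl_ball d r v z.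
Proof.
  intros Hz eps Heps. exists z. split; auto.
  destruct Hm as [_ [Hzero _]]. assert (d z z = 0) by (apply Hzero; auto). lra.
Qed.

Lemma ball_child_sub j c c' x :
  d c x < powerRZ r j -> d c' x < powerRZ r (j + 1) ->
  forall z, ball d r (mkVertex (j + 1) c') z -> ball d r (mkVertex j c) z.
Proof.
  destruct Hm as [_ [_ [Hsym Htri]]]. intros Hc Hc' z Hz.
  unfold ball in *; simpl in *. rewrite powerRZ_succ in Hz, Hc' by auto.
  pose proof (powerRZ_lt r j Hr0).
  pose proof (Htri z c' c). pose proof (Htri c' x c). pose proof (Hsym x c).
  nra.
Qed.

Lemma near_vertex_exists k x : (k0 <= k)%Z ->
  exists c, V k c /\ d c x < powerRZ r k.
Proof.
  intros Hk. apply (maximal_separated_net d); auto. apply powerRZ_lt; auto.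
Qed.

Lemma descending_walk (x : T) (k : Z) : (k0 <= k)%Z -> V k x ->
  forall (n : nat) (j : Z), (k0 <= j)%Z -> k = (j + Z.of_nat n)%Z ->
  exists c, V j c /\ d c x < powerRZ r j /\
    walk d r k0 V n (mkVertex j c) (mkVertex k x).
Proof.
  intros Hk Hx n. induction n as [| n IH]; intros j Hj Hjk.
  - rewrite Z.add_0_r in Hjk. subst j. exists x.
    split; [auto | split; [| constructor; split; auto]].
    destruct Hm as [_ [Hzero _]]. assert (d x x = 0) by (apply Hzero; auto).
    pose proof (powerRZ_lt r k Hr0). lra.
  - destruct (IH (j + 1)%Z) as [c' [Hc' [Hdc' Hw]]]; [lia | lia |].
    destruct (near_vertex_exists j x Hj) as [c [Hc Hdc]].
    exists c. split; [auto | split; [auto |]].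
    eapply walkS; [| exact Hw].
    split; [split; simpl; auto |]. split; [split; simpl; auto; lia |].
    split; [intro Heq; injection Heq; lia |].
    right; left. split; [reflexivity |]. eapply ball_child_sub; eauto.
Qed.

Lemma gdist_le_to_level_vertex v j : inV k0 V v -> (k0 <= j <= lev v)%Z ->
  exists c, V j c /\ d c (pt v) < powerRZ r j /\
    gdist_le d r k0 V v (mkVertex j c) (lev v - j).
Proof.
  intros [Hk Hx] Hj.
  destruct (descending_walk (pt v) (lev v) Hk Hx (Z.to_nat (lev v - j)) j)
    as [c [Hc [Hdc Hw]]]; [lia | lia |].
  exists c. split; [auto | split; [auto |]].
  apply gdist_le_sym. destruct v as [k x]. simpl in *.
  replace (k - j)%Z with (Z.of_nat (Z.to_nat (k - j))) by lia.
  apply gdist_le_of_walk; auto.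
Qed.

Lemma gdist_le_common_ball_point j c c' z :
  (k0 <= j)%Z -> V j c -> V j c' ->
  ball d r (mkVertex j c) z -> ball d r (mkVertex j c') z ->
  gdist_le d r k0 V (mkVertex j c) (mkVertex j c') 1.
Proof.
  intros Hj Hc Hc' Hz Hz'.
  destruct (classic (c = c')) as [<- | Hne].
  - apply gdist_le_refl; [split; auto | lia].
  - apply gdist_le_edge.
    split; [split; auto |]. split; [split; auto |].
    split; [intro Heq; injection Heq; auto |].
    left. split; [reflexivity |].
    exists z. split; apply ball_sub_cl_ball; auto.
Qed.

End HyperbolicApproximation.

Theorem mainTheorem15 (T : Type) (d : T -> T -> R) (r : R) (k0 : Z)
    (V : Z -> T -> Prop) (v v' : vertex T) (l : Z) :
  is_hyp_approx d r k0 V ->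
  inV k0 V v -> inV k0 V v' ->
  horiz_distinct d r v v' ->
  critical_level d r v v' l ->
  gdist_le d r k0 V v v' (lev v + lev v' - 2 * l + 3)%Z.
Proof.
  intros [Hm [_ [_ [Hr0 [Hr1 [[D [HD [HDk _]]] HV]]]]]] Hv Hv'
    [_ [_ Hmin]] [Hl Hl1].
  pose proof Hm as [_ [_ [Hsym Htri]]].
  assert (HdD : d (pt v) (pt v') <= D) by (apply HD; eauto).
  assert (Hk0l : (k0 < l)%Z) by (apply (powerRZ_lt_decr_inv r); lra).
  assert (Hlmin : (l - 1 < Z.min (lev v) (lev v'))%Z)
    by (apply (powerRZ_lt_decr_inv r); lra).
  destruct (gdist_le_to_level_vertex d r k0 V Hm Hr0 Hr1 HV v (l - 1) Hv)
    as [c [Hc [Hdc Hvc]]]; [lia |].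
  destruct (gdist_le_to_level_vertex d r k0 V Hm Hr0 Hr1 HV v' (l - 1) Hv')
    as [c' [Hc' [Hdc' Hv'c']]]; [lia |].
  assert (Hcc' : gdist_le d r k0 V (mkVertex (l - 1) c) (mkVertex (l - 1) c') 1).
  { apply (gdist_le_common_ball_point d r k0 V Hm (l - 1) c c' (pt v)); auto;
      [lia | |]; unfold ball; simpl.
    - rewrite Hsym. pose proof (powerRZ_lt r (l - 1) Hr0). lra.
    - pose proof (Htri (pt v) (pt v') c'). rewrite (Hsym (pt v') c') in *. lra. }
  replace (lev v + lev v' - 2 * l + 3)%Z
    with (lev v - (l - 1) + 1 + (lev v' - (l - 1)))%Z by lia.
  apply gdist_le_sym in Hv'c'.
  eapply gdist_le_trans; [eapply gdist_le_trans |]; eauto.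
Qed.
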